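(* Let $\Phi=(G,\varphi)$ be a complex unit gain graph with a pendant vertex $u$ whose unique neighbour is $v$, and let $F^{\varphi}=\Phi-u-v$ with underlying graph $F=G-u-v$. If $r(\Phi)=r(G)+2\theta(G)$ (respectively $r(\Phi)=r(G)-2\theta(G)$), then $v$ does not lie on any cycle of $G$, and $r(F^{\varphi})=r(F)+2\theta(F)$ (respectively $r(F^{\varphi})=r(F)-2\theta(F)$).
   Context: A complex unit gain graph $\Phi=(G,\varphi)$ consists of a finite simple graph $G$ with vertex set $\{v_1,\dots,v_n\}$ and a gain function $\varphi$ assigning to each oriented edge $e_{ij}$ ($v_iv_j\in E(G)$) a complex number of modulus $1$ with $\varphi(e_{ji})=\overline{\varphi(e_{ij})}$. $A(\Phi)$ is the Hermitian matrix with $(i,j)$ entry $\varphi(e_{ij})$ if $v_iv_j\in E(G)$ and $0$ otherwise; $r(\Phi)$ is its rank; $r(\cdot)$ of a simple graph is the rank of its $0$-$1$ adjacency matrix. Induced subgraphs of $\Phi$ (such as $\Phi-u-v$, obtained by deleting $u,v$ and incident edges) carry the gains of $\Phi$. $\theta(G)=|E(G)|-|V(G)|+\omega(G)$, $\omega(G)$ the number of components. A pendant vertex is a vertex of degree $1$. *)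

From HB Require Import structures.
From mathcomp Require Import all_boot all_order all_algebra.
From mathcomp Require Import reals complex.
Set Implicit Arguments. Unset Strict Implicit. Unset Printing Implicit Defensive.
Import Order.TTheory GRing.Theory Num.Theory.
Local Open Scope ring_scope.

Section Defs.
Variable T : finType.

Definition simple_graph (G : rel T) : Prop := symmetric G /\ irreflexive G.

Definition unit_gain (C : numClosedFieldType) (G : rel T) (phi : T -> T -> C) : Prop :=
  forall x y, G x y -> `|phi x y| = 1 /\ phi y x = (phi x y)^*.

Definition gain_adj (C : numClosedFieldType) (G : rel T) (phi : T -> T -> C)
  : 'M[C]_#|T| :=
  \matrix_(i, j) (if G (enum_val i) (enum_val j)
                  then phi (enum_val i) (enum_val j) else 0).

Definition gain_rank (C : numClosedFieldType) (G : rel T) (phi : T -> T -> C) : nat :=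
  \rank (gain_adj G phi).

Definition graph_rank (C : numClosedFieldType) (G : rel T) : nat :=
  \rank (gain_adj G (fun _ _ => 1 : C)).

Definition degree (G : rel T) (x : T) : nat := #|[set y | G x y]|.

Definition edges (G : rel T) : {set {set T}} :=
  [set e : {set T} | [exists x, exists y, G x y && (e == [set x; y])]].

Definition ncomp (G : rel T) : nat := n_comp G T.

Definition theta (G : rel T) : int :=
  (#|edges G|%:Z - #|T|%:Z + (ncomp G)%:Z)%R.

Definition on_cycle (G : rel T) (v : T) : Prop :=
  exists p : seq T, [/\ uniq (v :: p), (2 <= size p)%N & cycle G (v :: p)].

End Defs.

Definition del2_vert (T : finType) (u v : T) := {x : T | x \notin [set u; v]}.

Definition del2_graph (T : finType) (u v : T) (G : rel T) : rel (del2_vert u v) :=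
  fun x y => G (val x) (val y).

Definition del2_gain (T : finType) (u v : T) (C : Type) (phi : T -> T -> C)
  : del2_vert u v -> del2_vert u v -> C :=
  fun x y => phi (val x) (val y).
Arguments del2_graph {T} u v G.
Arguments del2_gain {T} u v {C} phi.

(* For gains phi1, phi2 that do not vanish on the edges of G,
   r(phi1) <= r(phi2) + 2 theta(G).  This is proved by induction over induced
   subgraphs G[S]: deleting an isolated vertex changes neither the ranks nor theta;
   deleting a pendant vertex together with its neighbour lowers every rank by
   exactly 2 and does not increase theta; deleting a vertex that lies on a cycle
   lowers r(phi1) by at most 2, does not increase r(phi2), and lowers theta by at
   least 1.  A nonempty graph with minimum degree at least 2 has a vertex on a cycle.
   For the theorem, r(Phi) = r(F^phi) + 2 and r(G) = r(F) + 2, while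
   theta(F) <= theta(G), strictly if v lies on a cycle: such a cycle avoids the
   pendant vertex u and joins two neighbours of v inside F.  Applying the inequality
   to F with (phi, 1) and with (1, phi) forces theta(F) = theta(G). *)

From HB Require Import structures.
From mathcomp Require Import all_boot all_order all_algebra.
From mathcomp Require Import reals complex.
From mathcomp Require Import zify.
Set Implicit Arguments. Unset Strict Implicit. Unset Printing Implicit Defensive.
Import Order.TTheory GRing.Theory Num.Theory.
Local Open Scope ring_scope.

Section FunRank.
Variable K : fieldType.

Definition fmx (T1 T2 : finType) (f : T1 -> T2 -> K) : 'M[K]_(#|T1|, #|T2|) :=
  \matrix_(i, j) f (enum_val i) (enum_val j).

Definition frank (T1 T2 : finType) (f : T1 -> T2 -> K) : nat := \rank (fmx f).

Lemma sum_enum_val (T : finType) (F : T -> K) : \sum_(i < #|T|) F (enum_val i) = \sum_y F y.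
Proof. by rewrite -(big_enum_val (A := T)); apply: eq_bigl => y; rewrite inE. Qed.

Lemma sum_delta (T : finType) (s : T) (F : T -> K) : \sum_y (y == s)%:R * F y = F s.
Proof.
rewrite (bigD1 s) //= eqxx mul1r big1 ?addr0 // => y /negbTE ->; exact: mul0r.
Qed.

Lemma fmx_mul (T1 T2 T3 : finType) (f : T1 -> T2 -> K) (g : T2 -> T3 -> K) :
  fmx f *m fmx g = fmx (fun x z => \sum_y f x y * g y z).
Proof.
apply/matrixP => i k; rewrite !mxE -(sum_enum_val (fun y => f _ y * g y _)).
by apply: eq_bigr => j _; rewrite !mxE.
Qed.

Lemma eq_fmx (T1 T2 : finType) (f g : T1 -> T2 -> K) : f =2 g -> fmx f = fmx g.
Proof. by move=> fg; apply/matrixP => i j; rewrite !mxE fg. Qed.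

Lemma eq_frank (T1 T2 : finType) (f g : T1 -> T2 -> K) : f =2 g -> frank f = frank g.
Proof. by move=> /eq_fmx; rewrite /frank => ->. Qed.

Lemma frankM_maxl (T1 T2 T3 : finType) (f : T1 -> T2 -> K) (g : T2 -> T3 -> K) :
  (frank (fun x z => \sum_y f x y * g y z)%R <= frank f)%N.
Proof. by rewrite /frank -fmx_mul mxrankM_maxl. Qed.

Lemma frankM_maxr (T1 T2 T3 : finType) (f : T1 -> T2 -> K) (g : T2 -> T3 -> K) :
  (frank (fun x z => \sum_y f x y * g y z)%R <= frank g)%N.
Proof. by rewrite /frank -fmx_mul mxrankM_maxr. Qed.

Lemma frank_add (T1 T2 : finType) (f g : T1 -> T2 -> K) :
  (frank (fun x y => f x y + g x y)%R <= frank f + frank g)%N.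
Proof.
rewrite /frank (_ : fmx _ = fmx f + fmx g) ?mxrank_add //.
by apply/matrixP => i j; rewrite !mxE.
Qed.

Lemma frank_tr (T1 T2 : finType) (f : T1 -> T2 -> K) : frank (fun y x => f x y) = frank f.
Proof.
rewrite /frank -mxrank_tr; congr (\rank _).
by apply/matrixP => i j; rewrite !mxE.
Qed.

Lemma frank_outer (T1 T2 : finType) (c : T1 -> K) (d : T2 -> K) :
  (frank (fun x y => c x * d y)%R <= 1)%N.
Proof.
have := frankM_maxl (fun x (_ : unit) => c x) (fun _ y => d y).
rewrite (@eq_frank _ _ _ (fun x y => c x * d y)); last first.
  by move=> x y; rewrite (big_pred1 tt) //; case.
by move/leq_trans; apply; rewrite (leq_trans (rank_leq_col _)) // card_unit.
Qed.

Lemma frank0 (T1 T2 : finType) (f : T1 -> T2 -> K) : f =2 (fun _ _ => 0) -> frank f = 0%N.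
Proof.
move=> f0; apply/eqP; rewrite mxrank_eq0; apply/eqP/matrixP => i j.
by rewrite !mxE f0.
Qed.

Lemma frank_gt0 (T1 T2 : finType) (f : T1 -> T2 -> K) x y : f x y != 0 -> (0 < frank f)%N.
Proof.
apply: contraNT; rewrite lt0n negbK mxrank_eq0 => /eqP/matrixP.
by move/(_ (enum_rank x) (enum_rank y)); rewrite !mxE !enum_rankK => ->.
Qed.

Lemma frank_scale (T1 T2 : finType) (f : T1 -> T2 -> K) (m1 : T1 -> K) (m2 : T2 -> K) :
  (frank (fun x y => m1 x * f x y * m2 y)%R <= frank f)%N.
Proof.
pose L x x' := (x' == x)%:R * m1 x.
pose R y' y := (y' == y)%:R * m2 y.
apply: leq_trans (frankM_maxl f R).
apply: leq_trans (frankM_maxr L (fun x z => \sum_y f x y * R y z)).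
apply/eq_leq/eq_frank => x y; rewrite /L /R.
under eq_bigr do under eq_bigr do rewrite mulrCA.
under eq_bigr do rewrite sum_delta -mulrA.
by rewrite sum_delta mulrA.
Qed.

Lemma frank_comp (T1 T2 T1' T2' : finType) (f : T1 -> T2 -> K)
    (h1 : T1' -> T1) (h2 : T2' -> T2) :
  (frank (fun x y => f (h1 x) (h2 y)) <= frank f)%N.
Proof.
pose L x s := (s == h1 x)%:R : K.
pose R t y := (t == h2 y)%:R : K.
apply: leq_trans (frankM_maxl f R).
apply: leq_trans (frankM_maxr L (fun x z => \sum_y f x y * R y z)).
apply/eq_leq/eq_frank => x y; rewrite /L /R.
by under eq_bigr do under eq_bigr do rewrite mulrC; under eq_bigr do rewrite sum_delta;
  rewrite sum_delta.
Qed.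

(* Since [c u = 0], row [u] is unchanged, so the operation can be undone. *)
Lemma frank_row_elim (T1 T2 : finType) (f : T1 -> T2 -> K) (u : T1) (c : T1 -> K) :
  c u = 0 -> frank (fun s t => f s t + c s * f u t) = frank f.
Proof.
move=> cu.
have elim_le (g : T1 -> T2 -> K) (c' : T1 -> K) :
    (frank (fun s t => g s t + c' s * g u t)%R <= frank g)%N.
  pose L s y := (y == s)%:R + c' s * (y == u)%:R.
  apply: leq_trans (frankM_maxr L g); apply/eq_leq/eq_frank => s t.
  under eq_bigr do rewrite mulrDl -mulrA.
  by rewrite big_split /= sum_delta -big_distrr /= sum_delta.
apply/eqP; rewrite eqn_leq elim_le /=.
have := elim_le (fun s t => f s t + c s * f u t) (fun s => - c s).
by congr (_ <= _)%N; apply: eq_frank => s t; rewrite cu mul0r addr0 mulNr addrK.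
Qed.

Lemma frank_disjointD (T1 T2 : finType) (g h : T1 -> T2 -> K)
    (A : {set T1}) (B : {set T2}) :
  (forall s t, (s \notin A) || (t \notin B) -> g s t = 0) ->
  (forall s t, (s \in A) || (t \in B) -> h s t = 0) ->
  frank (fun s t => g s t + h s t) = (frank g + frank h)%N.
Proof.
move=> g0 h0; apply/eqP; rewrite eqn_leq frank_add /=.
pose M := fmx (fun s t => g s t + h s t).
have gP s t : (s \in A)%:R * (g s t + h s t) = g s t.
  by case: (boolP (s \in A)) => sA; [rewrite mul1r (h0 s t) ?sA ?addr0 | rewrite mul0r g0 ?sA].
have hP s t : (s \notin A)%:R * (g s t + h s t) = h s t.
  by case: (boolP (s \in A)) => sA; [rewrite mul0r h0 ?sA | rewrite mul1r (g0 s t) ?sA ?add0r].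
have gM : fmx g = fmx (fun s s' => (s' == s)%:R * (s \in A)%:R) *m M.
  rewrite fmx_mul; apply: eq_fmx => s t.
  by under eq_bigr do rewrite -mulrA; rewrite sum_delta gP.
have hM : fmx h = fmx (fun s s' => (s' == s)%:R * (s \notin A)%:R) *m M.
  rewrite fmx_mul; apply: eq_fmx => s t.
  by under eq_bigr do rewrite -mulrA; rewrite sum_delta hP.
pose Q := fmx (fun t t' => (t == t')%:R * (t' \notin B)%:R).
have gQ : fmx g *m Q = 0.
  apply/matrixP => i j; rewrite /Q fmx_mul !mxE.
  under eq_bigr do rewrite mulrCA; rewrite sum_delta.
  by case: (boolP (_ \in B)) => tB; rewrite ?mulr0 // mulr1 g0 // tB orbT.
have hQ : fmx h *m Q = fmx h.
  rewrite /Q fmx_mul; apply: eq_fmx => s t.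
  under eq_bigr do rewrite mulrCA; rewrite sum_delta.
  by case: (boolP (t \in B)) => tB; rewrite ?mulr1 // mulr0 h0 // tB orbT.
have cap0 : (fmx g :&: fmx h)%MS = 0.
  have /submxP [D eD] := capmxSl (fmx g) (fmx h).
  have /submxP [D' eD'] := capmxSr (fmx g) (fmx h).
  have : (fmx g :&: fmx h)%MS *m Q = 0 by rewrite eD -mulmxA gQ mulmx0.
  by rewrite {1}eD' -mulmxA hQ -eD'.
rewrite /frank -/M -mxrank_disjoint_sum // mxrankS // addsmx_sub.
by rewrite gM hM !submxMl.
Qed.

Lemma frank_pivot (T1 T2 : finType) (f : T1 -> T2 -> K) (u : T1) (v : T2) (a : K) :
  a != 0 -> (forall t, f u t = (t == v)%:R * a) ->
  frank f = (frank (fun s t => if (s == u) || (t == v) then 0 else f s t)).+1.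
Proof.
move=> a0 fu; set f' := fun s t => _.
pose e s t := (s == u)%:R * ((t == v)%:R * a).
have -> : frank f = frank (fun s t => f' s t + e s t).
  rewrite -(@frank_row_elim _ _ f u (fun s => if s == u then 0 else - (f s v / a)));
    last by rewrite eqxx.
  apply: eq_frank => s t; rewrite /f' /e fu.
  case: (eqVneq s u) => [->|su]; first by rewrite mul0r !mul1r add0r addr0.
  case: (eqVneq t v) => [->|tv]; last by rewrite !mul0r mulr0 !addr0.
  by rewrite !mul1r mul0r addr0 mulNr divfK // subrr.
rewrite (@frank_disjointD _ _ f' e [set~ u] [set~ v]).
- rewrite -addn1; congr (_ + _)%N; apply/eqP; rewrite eqn_leq frank_outer.
  by apply: (@frank_gt0 _ _ _ u v); rewrite /e !eqxx !mul1r.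
- by move=> s t; rewrite !inE !negbK /f' => ->.
- by move=> s t; rewrite !inE /e => /orP [] /negbTE ->; rewrite ?mul0r ?mulr0.
Qed.

Lemma frank_pendant (T : finType) (f : T -> T -> K) (u v : T) (a b : K) :
  u != v -> a != 0 -> b != 0 ->
  (forall t, f u t = (t == v)%:R * a) -> (forall s, f s u = (s == v)%:R * b) ->
  frank f = (frank (fun s t =>
    if [|| s == u, s == v, t == u | t == v] then 0 else f s t)).+2.
Proof.
move=> uv a0 b0 fu fu'.
rewrite (frank_pivot a0 fu) -frank_tr (frank_pivot (u := u) (v := v) b0); last first.
  move=> s /=; rewrite (negbTE uv) orbF fu'.
  by case: (eqVneq s u) => [->|//]; rewrite (negbTE uv) mul0r.
congr _.+2; rewrite -[RHS]frank_tr; apply: eq_frank => s t /=.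
by case: (s == u); case: (t == v); case: (t == u); case: (s == v).
Qed.

Definition frestrict (T : finType) (S : {set T}) (f : T -> T -> K) : T -> T -> K :=
  fun s t => if (s \in S) && (t \in S) then f s t else 0.

Lemma frank_restrictS (T : finType) (S' S : {set T}) (f : T -> T -> K) :
  S' \subset S -> (frank (frestrict S' f) <= frank (frestrict S f))%N.
Proof.
move=> sub; apply: leq_trans (frank_scale _ (fun s => (s \in S')%:R) (fun s => (s \in S')%:R)).
apply/eq_leq/eq_frank => s t; rewrite /frestrict.
case: (boolP (s \in S')) => sS'; case: (boolP (t \in S')) => tS' /=;
  rewrite ?mul0r ?mulr0 ?mul1r ?mulr1 //.
by rewrite (subsetP sub _ sS') (subsetP sub _ tS').
Qed.

Lemma frank_restrictD1 (T : finType) (S : {set T}) (x : T) (f : T -> T -> K) :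
  (frank (frestrict S f) <= (frank (frestrict (S :\ x) f)).+2)%N.
Proof.
rewrite (@eq_frank _ _ _ (fun s t =>
    (frestrict (S :\ x) f s t + (s == x)%:R * frestrict S f x t)
    + (frestrict S f s x * (s != x)%:R) * (t == x)%:R)); last first.
  move=> s t; rewrite /frestrict !inE.
  case: (eqVneq s x) => [->|sx] /=; first by rewrite add0r mul1r mulr0 mul0r addr0.
  rewrite mul0r addr0 mulr1; case: (eqVneq t x) => [->|tx] /=.
    by rewrite andbF add0r mulr1.
  by rewrite mulr0 addr0.
apply: leq_trans (frank_add _ _) _; rewrite -addn2 -[2%N]/(1 + 1)%N addnA.
apply: leq_add (frank_outer _ _); apply: leq_trans (frank_add _ _) _.
exact: leq_add (leqnn _) (frank_outer _ _).
Qed.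

Lemma frestrict_setD1 (T : finType) (S : {set T}) (x : T) (f : T -> T -> K) :
  (forall t, t \in S -> f x t = 0 /\ f t x = 0) -> frestrict S f =2 frestrict (S :\ x) f.
Proof.
move=> fx s t; rewrite /frestrict !inE.
case: (eqVneq s x) => [->|sx] /=.
  by case: (boolP (x \in S)) => //= xS; case: (boolP (t \in S)) => // /fx [].
case: (eqVneq t x) => [->|tx]; rewrite ?andbF ?andbT //.
by case: (boolP (s \in S)) => // /fx []; case: (x \in S).
Qed.

Lemma frank_restrict_sig (T : finType) (P : pred T) (S : {set T}) (f : T -> T -> K) :
  (forall x, (x \in S) = P x) ->
  frank (fun x y : {x | P x} => f (val x) (val y)) = frank (frestrict S f).
Proof.
move=> SP; apply/eqP; rewrite eqn_leq; apply/andP; split.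
  apply: leq_trans (frank_comp (frestrict S f) val val).
  by apply/eq_leq/eq_frank => x y; rewrite /frestrict !SP (valP x) (valP y).
case: (pickP P) => [x0 Px0 | P0]; last first.
  by rewrite (@frank0 _ _ (frestrict S f)) // => s t; rewrite /frestrict SP P0.
pose p := insubd (exist P x0 Px0).
apply: leq_trans (frank_comp (fun x y : {x | P x} => f (val x) (val y)) p p).
apply: leq_trans (frank_scale _ (fun s => (s \in S)%:R) (fun s => (s \in S)%:R)).
apply/eq_leq/eq_frank => s t; rewrite /frestrict /p.
case: (boolP (s \in S)) => sS; case: (boolP (t \in S)) => tS /=;
  by rewrite ?mul0r ?mulr0 // mul1r mulr1 !insubdK // unfold_in -SP.
Qed.

Lemma frank_restrictT (T : finType) (f : T -> T -> K) : frank (frestrict setT f) = frank f.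
Proof. by apply: eq_frank => x y; rewrite /frestrict !inE. Qed.

End FunRank.

Section InducedSubgraph.
Variables (T : finType) (G : rel T).
Hypothesis Gsym : symmetric G.

Definition induced (S : {set T}) : rel T := fun x y => [&& x \in S, y \in S & G x y].
Definition nbrs (S : {set T}) (x : T) : {set T} := [set y in S | G x y].
Definition edges_in (S : {set T}) : {set {set T}} := [set e in edges G | e \subset S].
Definition ncomp_in (S : {set T}) : nat := n_comp (induced S) S.
Definition theta_in (S : {set T}) : int :=
  (#|edges_in S|%:Z - #|S|%:Z + (ncomp_in S)%:Z)%R.

Lemma induced_connect_sym (S : {set T}) : connect_sym (induced S).
Proof.
apply: sym_connect_sym => x y; rewrite /induced Gsym.
by case: (x \in S); case: (y \in S).
Qed.

Lemma induced_closed (S : {set T}) : closed (induced S) S.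
Proof. by move=> x y /and3P [-> -> _]. Qed.

Lemma connect_induced_mem (S : {set T}) (x y : T) :
  x \in S -> connect (induced S) x y -> y \in S.
Proof. by move=> xS /(closed_connect (@induced_closed S)) <-. Qed.

Lemma ncomp_in_roots (S : {set T}) : ncomp_in S = #|fingraph.root (induced S) @: S|.
Proof.
apply: eq_card => y; rewrite !inE.
apply/andP/imsetP => [[/eqP ry yS] | [z zS ->]]; first by exists y.
split; first exact: fingraph.roots_root (@induced_connect_sym S) _.
exact: connect_induced_mem zS (connect_root _ _).
Qed.

Lemma connect_setU1_avoid (S : {set T}) (x y w : T) :
  y \in S -> (forall z, z \in nbrs S x -> ~~ connect (induced S) y z) ->
  connect (induced (x |: S)) y w -> connect (induced S) y w.
Proof.
move=> yS avoid.
have cl : closed (induced (x |: S)) (connect (induced S) y).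
  apply: intro_closed; first exact: induced_connect_sym.
  move=> w1 w2 /and3P [_ w2S Gw]; rewrite !inE => cw1.
  have w1S := connect_induced_mem yS cw1.
  case/setU1P: w2S => [w2x | w2S].
    by move: (avoid w1); rewrite inE w1S -w2x Gsym Gw cw1 => /(_ isT).
  by apply: connect_trans cw1 (connect1 _); rewrite /induced w1S w2S.
by move=> /(closed_connect cl); rewrite !inE connect0 => <-.
Qed.

(* Components of G[S] that contain no neighbour of x remain components of
   G[x |: S], and x lies in yet another one. *)
Lemma ncomp_in_setU1 (S : {set T}) (x : T) : x \notin S ->
  (ncomp_in S + 1 <= #|fingraph.root (induced S) @: nbrs S x| + ncomp_in (x |: S))%N.
Proof.
move=> xS; set r := fingraph.root (induced S); set r' := fingraph.root (induced (x |: S)).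
set Q := r @: S :\: r @: nbrs S x.
have QS y : y \in Q -> y \in S.
  by case/setDP => /imsetP [z zS ->] _; exact: connect_induced_mem zS (connect_root _ _).
have Qroot y : y \in Q -> r y = y.
  by case/setDP => /imsetP [z zS ->] _; exact: fingraph.root_root (@induced_connect_sym S) z.
have Qavoid y z : y \in Q -> z \in nbrs S x -> ~~ connect (induced S) y z.
  move=> yQ zN; apply/negP => /(fingraph.rootP (@induced_connect_sym S)) ryz.
  case/setDP: (yQ) => _ /negP; apply; apply/imsetP; exists z => //.
  by rewrite -{1}(Qroot y yQ); exact: ryz.
have Qconnect y w : y \in Q -> connect (induced (x |: S)) y w -> connect (induced S) y w.
  by move=> yQ; apply: connect_setU1_avoid (QS y yQ) (Qavoid y ^~ yQ).
have r'_inj : {in x |: Q &, injective r'}.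
  move=> y1 y2 /setU1P [-> | y1Q] /setU1P [-> | y2Q] //
     /(fingraph.rootP (@induced_connect_sym (x |: S))) c.
  - rewrite induced_connect_sym in c.
    by rewrite (connect_induced_mem (QS _ y2Q) (Qconnect _ _ y2Q c)) in xS.
  - by rewrite (connect_induced_mem (QS _ y1Q) (Qconnect _ _ y1Q c)) in xS.
  - rewrite -(Qroot _ y1Q) -(Qroot _ y2Q).
    exact/(fingraph.rootP (@induced_connect_sym S))/Qconnect.
have : (#|Q| + 1 <= ncomp_in (x |: S))%N.
  have xQ : x \notin Q by apply: contra xS => /QS.
  rewrite ncomp_in_roots (_ : #|Q| + 1 = #|x |: Q|)%N; last by rewrite cardsU1 xQ addnC.
  rewrite -(card_in_imset r'_inj); apply/subset_leq_card/imsetS/subsetP => y.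
  by case/setU1P => [-> | /QS yS]; rewrite !inE ?eqxx ?yS ?orbT.
have : (#|r @: S :&: r @: nbrs S x| <= #|r @: nbrs S x|)%N.
  exact/subset_leq_card/subsetIr.
by rewrite [ncomp_in S]ncomp_in_roots -/r -(cardsID (r @: nbrs S x) (r @: S)) -/Q; lia.
Qed.

Lemma mem_edges (x y : T) : G x y -> [set x; y] \in edges G.
Proof.
by move=> Gxy; rewrite inE; apply/existsP; exists x; apply/existsP; exists y; rewrite Gxy /=.
Qed.

Lemma edges_in_setU1 (S : {set T}) (x : T) : x \notin S ->
  (#|edges_in S| + #|nbrs S x| <= #|edges_in (x |: S)|)%N.
Proof.
move=> xS; set B := [set [set x; y] | y in nbrs S x].
have cardB : #|B| = #|nbrs S x|.
  apply: card_in_imset => y1 y2; rewrite !inE => /andP [y1S _] _ /setP /(_ y1).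
  rewrite !inE eqxx orbT => /esym/orP [/eqP y1x | /eqP //].
  by rewrite -y1x y1S in xS.
have disj : [disjoint edges_in S & B].
  rewrite -setI_eq0; apply/eqP/setP => e; rewrite !inE.
  apply/negP => /andP [/andP [_ eS] /imsetP [y _ ey]].
  by move: xS; rewrite (subsetP eS x) // ey !inE eqxx.
have := (leq_card_setU (edges_in S) B).2; rewrite disj cardB => /eqP <-.
apply/subset_leq_card/subsetP => e.
case/setUP => [| /imsetP [y]].
  by rewrite !inE => /andP [-> /subset_trans]; apply; exact: subsetUr.
rewrite inE => /andP [yS Gxy] ->; rewrite inE mem_edges //=.
by apply/subsetP => z; rewrite !inE => /orP [] /eqP ->; rewrite ?eqxx ?yS ?orbT.
Qed.

Lemma theta_in_setU1 (S : {set T}) (x : T) : x \notin S ->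
  (theta_in S + #|nbrs S x|%:Z - #|fingraph.root (induced S) @: nbrs S x|%:Z
     <= theta_in (x |: S))%R.
Proof.
move=> xS; have := edges_in_setU1 xS; have := ncomp_in_setU1 xS.
rewrite /theta_in cardsU1 xS; lia.
Qed.

Lemma theta_in_setU1_le (S : {set T}) (x : T) : x \notin S ->
  (theta_in S <= theta_in (x |: S))%R.
Proof.
move=> xS; have := theta_in_setU1 xS.
have := leq_imset_card (fingraph.root (induced S)) (nbrs S x); lia.
Qed.

Lemma theta_inS (S S' : {set T}) : S \subset S' -> (theta_in S <= theta_in S')%R.
Proof.
move: {2}#|S' :\: S| (leqnn #|S' :\: S|) => n; elim: n S => [|n IH] S card_n SS'.
  suff -> : S = S' by [].
  by apply/eqP; rewrite eqEsubset SS' -setD_eq0 -cards_eq0 -leqn0.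
have [S'S | ] := boolP (S' \subset S).
  by suff -> : S = S' by []; apply/eqP; rewrite eqEsubset SS'.
rewrite -setD_eq0 => /set0Pn [x /setDP [xS' xS]].
apply: le_trans (theta_in_setU1_le xS) (IH _ _ _); last by rewrite subUset sub1set xS'.
by move: card_n; rewrite (cardsD1 x) in_setD xS' xS /= setDDl setUC add1n ltnS.
Qed.

Lemma theta_in_setU1_cycle (S : {set T}) (x a b : T) : x \notin S ->
  a != b -> a \in nbrs S x -> b \in nbrs S x -> connect (induced S) a b ->
  (theta_in S + 1 <= theta_in (x |: S))%R.
Proof.
move=> xS ab aN bN cab; set r := fingraph.root (induced S).
have : (#|r @: nbrs S x| <= #|nbrs S x :\ b|)%N.
  apply: leq_trans (leq_imset_card r _); apply/subset_leq_card/subsetP => z.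
  case/imsetP => y yN ->; apply/imsetP.
  case: (eqVneq y b) => [-> | yb]; last by exists y; rewrite // in_setD1 yb.
  exists a; first by rewrite in_setD1 ab.
  exact/esym/(fingraph.rootP (@induced_connect_sym S)).
have := cardsD1 b (nbrs S x); rewrite bN.
have := theta_in_setU1 xS; rewrite -/r; lia.
Qed.

Lemma path_induced_sub (S : {set T}) (x : T) (q : seq T) :
  path (induced S) x q -> {subset q <= S}.
Proof.
elim: q x => //= y q IH x /andP [/and3P [_ yS _] /IH qS] w.
by rewrite inE => /orP [/eqP -> | /qS].
Qed.

Lemma path_induced_setD1 (S : {set T}) (x y : T) (q : seq T) :
  x \notin y :: q -> path (induced S) y q -> path (induced (S :\ x)) y q.
Proof.
elim: q y => //= z q IH y; rewrite !inE negb_or => /andP [xy xzq].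
case/andP => /and3P [yS zS Gyz] pq; rewrite IH // /induced !in_setD1 yS zS Gyz.
by rewrite !andbT eq_sym xy eq_sym; apply: contraNneq xzq => ->; rewrite eqxx.
Qed.

Hypothesis Girr : irreflexive G.

(* Grow a path at its head x: a neighbour of x other than its successor is either
   new, making the path longer, or already on the path, closing a cycle through x. *)
Lemma mindeg2_cycle (S : {set T}) : S != set0 ->
  (forall x, x \in S -> 1 < #|nbrs S x|)%N ->
  exists x a b, [/\ x \in S, a != b, a \in nbrs (S :\ x) x,
                   b \in nbrs (S :\ x) x & connect (induced (S :\ x)) a b].
Proof.
move=> S0 deg2; set Cyc := exists x a b, _.
have other_nbr x y : x \in S -> exists2 z, z \in nbrs S x & z != y.
  move=> xS; have := deg2 x xS; rewrite (cardsD1 y) => lt1.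
  have /set0Pn [z] : nbrs S x :\ y != set0.
    by rewrite -card_gt0; move: lt1; case: (y \in nbrs S x) => /=; lia.
  by rewrite in_setD1 => /andP [zy zN]; exists z.
suff /(_ #|S|) [// | [x [q [xS sq uq pq]]]] : forall n, Cyc \/
    exists x q, [/\ x \in S, size q = n, uniq (x :: q) & path (induced S) x q].
  have : (size (x :: q) <= #|S|)%N.
    rewrite cardE; apply: uniq_leq_size => // w; rewrite mem_enum inE.
    by case/orP => [/eqP -> // | /(path_induced_sub pq)].
  by rewrite /= sq ltnn.
elim=> [|n [cyc | [x [q [xS sq uq pq]]]]]; [ | by left | ].
  by right; have /set0Pn [x xS] := S0; exists x, [::].
have [z zN zh] := other_nbr x (head x q) xS.
move: (zN); rewrite inE => /andP [zS Gxz].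
case: (boolP (z \in x :: q)) => zq; last first.
  right; exists z, (x :: q); split => //=; first by rewrite sq.
    by rewrite zq.
  by rewrite pq /induced zS xS Gsym Gxz.
have zx : z != x by apply: contraTneq Gxz => ->; rewrite Girr.
case: q sq uq pq zh zq => [|y q] _; first by rewrite mem_seq1 (negbTE zx).
rewrite /= => /andP [xyq _] /andP [/and3P [_ yS Gxy] pq] zy.
rewrite !inE (negbTE zx) (negbTE zy) /= => zq.
have xy : x != y by apply: contraNneq xyq => ->; rewrite mem_head.
left; exists x, y, z; split=> //; first by rewrite eq_sym.
- by rewrite !inE eq_sym xy yS Gxy.
- by rewrite !inE zx zS Gxz.
- by apply: (path_connect (path_induced_setD1 xyq pq)); rewrite inE zq orbT.
Qed.

Lemma theta_in_setT : theta G = theta_in setT.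
Proof.
rewrite /theta_in; have -> : edges_in setT = edges G.
  by apply/setP => e; rewrite !inE subsetT andbT.
have -> : ncomp_in setT = ncomp G.
  rewrite /ncomp /ncomp_in (@eq_n_comp_r _ _ setT (mem T)) => [|z]; last by rewrite !inE.
  by apply/eq_n_comp/eq_connect => x y; rewrite /induced !inE.
by rewrite cardsT.
Qed.

Lemma theta_sig (P : pred T) (S : {set T}) : (forall x, (x \in S) = P x) ->
  theta (fun x y : {x | P x} => G (val x) (val y)) = theta_in S.
Proof.
move=> SP; set G' := fun x y : {x | P x} => _.
have cardV : #|{: {x | P x}}| = #|S|.
  by rewrite card_sig; apply: eq_card => x; rewrite !inE SP.
have cardE : #|edges G'| = #|edges_in S|.
  rewrite -(card_imset _ (imset_inj val_inj)); apply: eq_card => e.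
  apply/imsetP/idP => [[e' + ->] |].
    rewrite inE => /existsP [x /existsP [y /andP [Gxy /eqP ->]]].
    rewrite imsetU1 imset_set1 inE mem_edges //=.
    by apply/subsetP => z; rewrite !inE => /orP [] /eqP ->; rewrite SP (valP _).
  rewrite !inE => /andP [/existsP [x /existsP [y /andP [Gxy /eqP eE]]] eS].
  have Px : P x by rewrite -SP (subsetP eS) // eE !inE eqxx.
  have Py : P y by rewrite -SP (subsetP eS) // eE !inE eqxx orbT.
  exists [set exist P x Px; exist P y Py]; last by rewrite imsetU1 imset_set1.
  rewrite inE; apply/existsP; exists (exist P x Px); apply/existsP; exists (exist P y Py).
  by rewrite /G' /= Gxy eqxx.
have cardC : ncomp G' = ncomp_in S.
  have sym' : connect_sym G' by apply: sym_connect_sym => x y; rewrite /G' Gsym.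
  have adj : rel_adjunction val (induced S) G' S.
    apply: strict_adjunction => //; [exact: induced_closed | exact: val_inj | |].
    - by apply/subsetP => x; rewrite SP => Px; apply/codomP; exists (exist P x Px).
    - by move=> x y _; rewrite /induced /G' !SP (valP x) (valP y).
  rewrite /ncomp_in.
  rewrite (adjunction_n_comp val (@induced_connect_sym S) sym' (@induced_closed S) adj).
  by apply: eq_n_comp_r => x; rewrite !inE SP (valP x).
by rewrite /theta /theta_in cardV cardE cardC.
Qed.

Lemma on_cycle_pendant_nbr (u v : T) : (forall y, G u y -> y = v) -> on_cycle G v ->
  exists a b, [/\ a != b, a \in nbrs (~: [set u; v]) v, b \in nbrs (~: [set u; v]) v
                 & connect (induced (~: [set u; v])) a b].
Proof.
move=> pu [p [/andP [vp up] sp +]]; set Z := ~: [set u; v].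
rewrite /cycle rcons_path => /andP [pth Glast].
(* Both neighbours of u on the cycle would be v. *)
have unp : u \notin p.
  apply/negP => up'; move: pth sp vp; case/splitPr: up' => p1 p2.
  rewrite cat_path /= => /and3P [_ Gu1 p2p] sp vp.
  case: p2 p2p sp vp => [|y p2] /=; last first.
    by case/andP => /pu -> _ _; rewrite mem_cat !inE eqxx !orbT.
  case: p1 Gu1 => [|y p1] /=; first by rewrite ltnn.
  rewrite Gsym => /pu lv _ _ /negP; apply.
  by move: (mem_last y p1); rewrite lv -cat_cons mem_cat => ->.
have pZ w : w \in p -> w \in Z.
  move=> wp; rewrite !inE negb_or; apply/andP.
  by split; [apply: contraNneq unp | apply: contraNneq vp] => <-.
case: p sp pth Glast vp up unp pZ => [//|x1 p1] sp /= /andP [Gv1 pth] Gk vp up unp pZ.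
have lastp1 : last x1 p1 \in p1.
  by case: p1 sp {up pth Gk vp unp pZ} => [//|y p1] _ /=; exact: mem_last.
exists x1, (last x1 p1); split.
- by apply: contraNneq (andP up).1 => ->.
- by rewrite inE pZ ?mem_head.
- by rewrite inE pZ ?inE ?lastp1 ?orbT // Gsym.
- apply: (path_connect (p := p1)); last exact: mem_last.
  apply: (sub_in_path (P := [in Z])) pth => [w1 w2 w1Z w2Z Gw|].
    by rewrite /induced w1Z w2Z.
  by apply/allP => w /pZ.
Qed.

End InducedSubgraph.

Section WeightedAdjacency.
Variables (K : fieldType) (T : finType) (G : rel T).
Hypotheses (Gsym : symmetric G) (Girr : irreflexive G).

Definition adjf (phi : T -> T -> K) : T -> T -> K :=
  fun x y => if G x y then phi x y else 0.

Lemma frank_restrict_pendant (phi : T -> T -> K) (S : {set T}) (u v : T) :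
  (forall x y, G x y -> phi x y != 0) -> u \in S -> v \in S -> G u v ->
  (forall t, t \in S -> G u t -> t = v) ->
  frank (frestrict S (adjf phi)) = (frank (frestrict (S :\: [set u; v]) (adjf phi))).+2.
Proof.
move=> phi0 uS vS Guv pu; have uv : u != v by apply: contraTneq Guv => ->; rewrite Girr.
have row_u t : frestrict S (adjf phi) u t = (t == v)%:R * phi u v.
  rewrite /frestrict /adjf uS; case: (eqVneq t v) => [->|tv]; first by rewrite vS Guv mul1r.
  rewrite mul0r; case: (boolP (t \in S)) => //= tS.
  by case: ifP => // Gut; rewrite (pu t tS Gut) eqxx in tv.
have col_u s : frestrict S (adjf phi) s u = (s == v)%:R * phi v u.
  rewrite /frestrict /adjf uS andbT; case: (eqVneq s v) => [->|sv].
    by rewrite vS Gsym Guv mul1r.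
  rewrite mul0r; case: (boolP (s \in S)) => //= sS.
  by rewrite Gsym; case: ifP => // Gus; rewrite (pu s sS Gus) eqxx in sv.
have phi_uv : phi u v != 0 by exact: phi0.
have phi_vu : phi v u != 0 by apply: phi0; rewrite Gsym.
rewrite (frank_pendant uv phi_uv phi_vu row_u col_u); congr _.+2.
apply: eq_frank => s t; rewrite /frestrict !inE.
by case: (s == u); case: (s == v); case: (t == u); case: (t == v);
  case: (s \in S); case: (t \in S).
Qed.

Section Bound.
Variables phi1 phi2 : T -> T -> K.
Hypotheses (phi1_neq0 : forall x y, G x y -> phi1 x y != 0)
           (phi2_neq0 : forall x y, G x y -> phi2 x y != 0).

Let rank_gap_le (S : {set T}) : Prop :=
  ((frank (frestrict S (adjf phi1)))%:Z
     <= (frank (frestrict S (adjf phi2)))%:Z + 2 * theta_in G S)%R.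

Lemma rank_gap_cycle (S : {set T}) (x a b : T) : x \in S -> a != b ->
  a \in nbrs G (S :\ x) x -> b \in nbrs G (S :\ x) x ->
  connect (induced G (S :\ x)) a b -> rank_gap_le (S :\ x) -> rank_gap_le S.
Proof.
move=> xS ab aN bN cab; rewrite /rank_gap_le.
have := theta_in_setU1_cycle Gsym (negbT (setD11 x S)) ab aN bN cab; rewrite setD1K //.
have := frank_restrictD1 S x (adjf phi1).
have := frank_restrictS (adjf phi2) (subD1set S x); lia.
Qed.

Lemma rank_gap_isolated (S : {set T}) (x : T) : x \in S -> nbrs G S x = set0 ->
  rank_gap_le (S :\ x) -> rank_gap_le S.
Proof.
move=> xS Nx; rewrite /rank_gap_le.
have noG t : t \in S -> G x t = false.
  by move=> tS; apply/negbTE/negP => Gxt; have := in_set0 t; rewrite -Nx inE tS Gxt.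
have restrict_eq phi : frank (frestrict S (adjf phi)) = frank (frestrict (S :\ x) (adjf phi)).
  by apply/eq_frank/frestrict_setD1 => t tS; rewrite /adjf noG // Gsym noG.
rewrite !restrict_eq; have := theta_inS Gsym (subD1set S x); lia.
Qed.

Lemma rank_gap_pendant (S : {set T}) (u v : T) : u \in S -> nbrs G S u = [set v] ->
  rank_gap_le (S :\: [set u; v]) -> rank_gap_le S.
Proof.
move=> uS Nu; rewrite /rank_gap_le.
have /setIdP [vS Guv] : v \in nbrs G S u by rewrite Nu set11.
have pu t : t \in S -> G u t -> t = v.
  by move=> tS Gut; apply/set1P; rewrite -Nu inE tS Gut.
rewrite !(frank_restrict_pendant _ uS vS Guv pu) //.
have := theta_inS Gsym (subsetDl S [set u; v]); lia.
Qed.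

Lemma rank_gap_le0 : rank_gap_le set0.
Proof.
have rank0 phi : frank (frestrict set0 (adjf phi)) = 0%N.
  by apply: frank0 => s t; rewrite /frestrict inE.
by rewrite /rank_gap_le !rank0 /theta_in cards0; lia.
Qed.

Lemma rank_gap_leT (S : {set T}) : rank_gap_le S.
Proof.
move: {2}#|S| (leqnn #|S|) => n; elim: n S => [|n IH] S cardS.
  by move: cardS; rewrite leqn0 cards_eq0 => /eqP ->; exact: rank_gap_le0.
have [-> | S0] := eqVneq S set0; first exact: rank_gap_le0.
have IHS (S' : {set T}) : S' \proper S -> rank_gap_le S'.
  by move=> /proper_card ltS'; apply: IH; move: ltS' cardS; lia.
case: (boolP [exists x in S, #|nbrs G S x| <= 1]%N).
  case/exists_inP => x xS; rewrite leq_eqVlt ltnS leqn0.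
  case/orP => [/cards1P [v Nx] | /eqP /cards0_eq Nx].
    apply: (rank_gap_pendant xS Nx); apply/IHS/(sub_proper_trans _ (properD1 xS)).
    by apply: setDS; rewrite sub1set !inE eqxx.
  exact/(rank_gap_isolated xS Nx)/IHS/properD1.
move/exists_inPn => deg_le1.
have deg2 x : x \in S -> (1 < #|nbrs G S x|)%N by move/deg_le1; rewrite ltnNge.
have [x [a [b [xS ab aN bN cab]]]] := mindeg2_cycle Gsym Girr S0 deg2.
exact: rank_gap_cycle xS ab aN bN cab (IHS _ (properD1 xS)).
Qed.

Lemma frank_adjf_le :
  ((frank (adjf phi1))%:Z <= (frank (adjf phi2))%:Z + 2 * theta G)%R.
Proof. by have := rank_gap_leT setT; rewrite /rank_gap_le !frank_restrictT theta_in_setT. Qed.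

End Bound.
End WeightedAdjacency.

Lemma unit_gain_neq0 (C : numClosedFieldType) (T : finType) (G : rel T)
    (phi : T -> T -> C) :
  unit_gain G phi -> forall x y, G x y -> phi x y != 0.
Proof. by move=> ug x y /ug [phi1 _]; rewrite -normr_eq0 phi1 oner_eq0. Qed.

Lemma unit_gain1 (C : numClosedFieldType) (T : finType) (G : rel T) :
  unit_gain G (fun _ _ => 1 : C).
Proof. by move=> x y _; rewrite normr1 conjC1. Qed.

Lemma gain_rankE (C : numClosedFieldType) (T : finType) (G : rel T)
    (phi : T -> T -> C) :
  gain_rank G phi = frank (adjf G phi).
Proof. by []. Qed.

Lemma gain_rank_le_theta (C : numClosedFieldType) (T : finType) (G : rel T)
    (phi1 phi2 : T -> T -> C) :
  simple_graph G -> unit_gain G phi1 -> unit_gain G phi2 ->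
  ((gain_rank G phi1)%:Z <= (gain_rank G phi2)%:Z + 2 * theta G)%R.
Proof.
move=> [Gsym Girr] /unit_gain_neq0 phi1_neq0 /unit_gain_neq0 phi2_neq0.
by rewrite !gain_rankE; exact: frank_adjf_le.
Qed.

Section DeletePendantEdge.
Variables (T : finType) (G : rel T) (u v : T).
Hypotheses (Gsym : symmetric G) (u_pendant : forall y, G u y -> y = v).

Let Z := ~: [set u; v].

Lemma simple_graph_del2 : simple_graph G -> simple_graph (del2_graph u v G).
Proof. by case=> sym irr; split=> [x y | x]; [exact: sym | exact: irr]. Qed.

Lemma unit_gain_del2 (C : numClosedFieldType) (phi : T -> T -> C) :
  unit_gain G phi -> unit_gain (del2_graph u v G) (del2_gain u v phi).
Proof. by move=> ug x y /ug. Qed.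

Lemma gain_rank_del2 (C : numClosedFieldType) (phi : T -> T -> C) :
  simple_graph G -> G u v -> unit_gain G phi ->
  gain_rank G phi = (gain_rank (del2_graph u v G) (del2_gain u v phi)).+2.
Proof.
move=> [_ Girr] Guv /unit_gain_neq0 phi_neq0.
rewrite [gain_rank G phi]gain_rankE -frank_restrictT.
rewrite (frank_restrict_pendant Gsym Girr phi_neq0 (in_setT u) (in_setT v) Guv) ?setTD;
  last by move=> t _; exact: u_pendant.
by rewrite -(@frank_restrict_sig _ _ (fun x => x \notin [set u; v])) // => x; rewrite inE.
Qed.

Lemma theta_del2_le : (theta (del2_graph u v G) <= theta G)%R.
Proof.
rewrite (@theta_sig _ _ Gsym _ Z) => [|x]; last by rewrite inE.
by rewrite theta_in_setT; exact: theta_inS (subsetT Z).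
Qed.

Lemma theta_del2_lt : on_cycle G v -> (theta (del2_graph u v G) < theta G)%R.
Proof.
move=> /(on_cycle_pendant_nbr Gsym u_pendant) [a [b [ab aN bN cab]]].
have vZ : v \notin Z by rewrite !inE eqxx orbT.
rewrite (@theta_sig _ _ Gsym _ Z) => [|x]; last by rewrite inE.
rewrite theta_in_setT; apply: lt_le_trans (theta_inS Gsym (subsetT (v |: Z))).
by have := theta_in_setU1_cycle Gsym vZ ab aN bN cab; lia.
Qed.

End DeletePendantEdge.

Lemma degree1_nbr (T : finType) (G : rel T) (u v : T) :
  degree G u = 1%N -> G u v -> forall y, G u y -> y = v.
Proof.
move=> /eqP/cards1P [w Nu] Guv y Guy.
have nbr_w z : G u z -> z = w by move=> Guz; apply/set1P; rewrite -Nu inE.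
by rewrite (nbr_w y Guy) (nbr_w v Guv).
Qed.

Theorem theorem4p2 (R : realType) (T : finType) (G : rel T)
    (phi : T -> T -> R[i]) (u v : T) :
  simple_graph G -> unit_gain G phi ->
  degree G u = 1%N -> G u v ->
  let F := del2_graph u v G in
  let Fphi := del2_gain u v phi in
  ((gain_rank G phi)%:Z = (graph_rank R[i] G)%:Z + 2 * theta G ->
     ~ on_cycle G v /\
     (gain_rank F Fphi)%:Z = (graph_rank R[i] F)%:Z + 2 * theta F) /\
  ((gain_rank G phi)%:Z = (graph_rank R[i] G)%:Z - 2 * theta G ->
     ~ on_cycle G v /\
     (gain_rank F Fphi)%:Z = (graph_rank R[i] F)%:Z - 2 * theta F).
Proof.
move=> simG ug du Guv F Fphi; have [Gsym _] := simG.
have u_pendant := degree1_nbr du Guv.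
have rankG : gain_rank G phi = (gain_rank F Fphi).+2 :=
  gain_rank_del2 Gsym u_pendant simG Guv ug.
have rank1G : graph_rank R[i] G = (graph_rank R[i] F).+2 :=
  gain_rank_del2 Gsym u_pendant simG Guv (@unit_gain1 R[i] _ G).
have simF : simple_graph F := simple_graph_del2 u v simG.
have ugF : unit_gain F Fphi := unit_gain_del2 ug.
have rankF_le : (gain_rank F Fphi)%:Z <= (graph_rank R[i] F)%:Z + 2 * theta F :=
  gain_rank_le_theta simF ugF (@unit_gain1 R[i] _ F).
have rankF_ge : (graph_rank R[i] F)%:Z <= (gain_rank F Fphi)%:Z + 2 * theta F :=
  gain_rank_le_theta simF (@unit_gain1 R[i] _ F) ugF.
have thetaF_le : theta F <= theta G := theta_del2_le u v Gsym.
have thetaF_lt : on_cycle G v -> theta F < theta G := theta_del2_lt Gsym u_pendant.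
by rewrite rankG rank1G; split=> rank_eq; split=> [/thetaF_lt|]; lia.
Qed.
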